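(* Let $({\mathbf\Lambda}^\star,{\mathbf V}^\star)$ with ${\mathbf\Lambda}^\star,{\mathbf V}^\star\ge0$ be a minimizer of $F$ over pairs of entrywise nonnegative matrices. Then for every randomized prediction $\pi$ supported on the grid and satisfying $\mathcal U_s(\pi,\ell)\le\epsilon_s$ for all $\ell\in[\![L]\!]$, $s\in[K]$, we have $$\mathcal R(\pi_{{\mathbf\Lambda}^\star,{\mathbf V}^\star})\le\mathcal R(\pi)+\frac{\log(2L+1)}{\beta}.$$
   Context: Let $K\ge 2$, $d\ge1$, and let $(X,S,Y)$ be a random triple with values in $\mathbb R^d\times[K]\times\mathbb R$, $\mathbb E[Y^2]<\infty$. Put $\eta(x)=\mathbb E[Y\mid X=x]$, $p_s=\mathbb P(S=s)>0$, $\tau_s(x)=\mathbb P(S=s\mid X=x)$, $t_s(x)=1-\tau_s(x)/p_s$, $\mathbf t(x)=(t_s(x))_{s\in[K]}$. Fix $B>0$, $L\in\mathbb N$, $\beta>0$, $\boldsymbol\epsilon=(\epsilon_s)\in[0,1]^K$; $[\![L]\!]=\{-L,\dots,L\}$, $r_\ell(x)=(\eta(x)-\ell B/L)^2$. A randomized prediction is a Markov kernel $\pi$ from $\mathbb R^d$ to $\mathbb R$; it is supported on the grid if each $\pi(\cdot\mid x)$ is concentrated on $\{\ell B/L:\ell\in[\![L]\!]\}$, with $\pi(\ell\mid x)$ the mass at $\ell B/L$. $\mathcal R(\pi)=\mathbb E[\int(\hat y-\eta(X))^2\pi(d\hat y\mid X)]$; $\mathcal U_s(\pi,\ell)=|\mathbb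 E[\pi(\ell\mid X)\mid S=s]-\mathbb E[\pi(\ell\mid X)]|$. $\mathrm{LSE}_\beta(\mathbf w)=\beta^{-1}\log\sum_j e^{\beta w_j}$, $\sigma_j(\mathbf w)=e^{w_j}/\sum_ie^{w_i}$. For ${\mathbf\Lambda}=(\lambda_{\ell s}),{\mathbf V}=(\nu_{\ell s})$ with rows $\boldsymbol\lambda_\ell,\boldsymbol\nu_\ell\in\mathbb R^K$: $F({\mathbf\Lambda},{\mathbf V})=\mathbb E\big[\mathrm{LSE}_\beta\big((\langle\boldsymbol\lambda_\ell-\boldsymbol\nu_\ell,\mathbf t(X)\rangle-r_\ell(X))_{\ell\in[\![L]\!]}\big)\big]+\sum_{\ell}\langle\boldsymbol\lambda_\ell+\boldsymbol\nu_\ell,\boldsymbol\epsilon\rangle$, and $\pi_{{\mathbf\Lambda},{\mathbf V}}(\ell\mid x)=\sigma_\ell\big(\beta(\langle\boldsymbol\lambda_{\ell'}-\boldsymbol\nu_{\ell'},\mathbf t(x)\rangle-r_{\ell'}(x))_{\ell'\in[\![L]\!]}\big)$. *)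

From HB Require Import structures.
From mathcomp Require Import all_boot all_order all_algebra.
From mathcomp Require Import all_classical all_reals all_analysis.
Set Implicit Arguments. Unset Strict Implicit. Unset Printing Implicit Defensive.
Import Order.TTheory GRing.Theory Num.Theory.
Local Open Scope ring_scope.
Local Open Scope classical_set_scope.

(* Feature space R^d is modeled as d.-tuple R with the product (coordinate)
   sigma-algebra of Borel sets, i.e. the Borel sigma-algebra of R^d. *)

Definition is_cond_exp (dO : measure_display) (Omega : measurableType dO)
  (R : realType) (P : probability Omega R)
  (dT : measure_display) (T : measurableType dT)
  (X : Omega -> T) (Z : Omega -> R) (g : T -> R) : Prop :=
  [/\ measurable_fun setT g,
      P.-integrable setT (fun w => (g (X w))%:E) &
      forall A : set T, measurable A ->
        (\int[P]_(w in X @^-1` A) (Z w)%:E = \int[P]_(w in X @^-1` A) (g (X w))%:E)%E].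

Definition pS (dO : measure_display) (Omega : measurableType dO)
  (R : realType) (P : probability Omega R) (K : nat) (S : Omega -> 'I_K)
  (s : 'I_K) : R := fine (P (S @^-1` [set s])).

Definition tfun (dO : measure_display) (Omega : measurableType dO)
  (R : realType) (P : probability Omega R) (K d : nat) (S : Omega -> 'I_K)
  (tau : 'I_K -> d.-tuple R -> R) (s : 'I_K) (x : d.-tuple R) : R :=
  1 - tau s x / pS P S s.

(* grid index l : 'I_(2L+1) stands for the integer l - L in [[L]];
   grid point l B / L *)
Definition gridpt (R : realType) (L : nat) (B : R) (l : 'I_(2 * L).+1) : R :=
  ((l : nat)%:R - L%:R) * B / L%:R.

Definition rfun (R : realType) (d L : nat) (B : R) (eta : d.-tuple R -> R)
  (l : 'I_(2 * L).+1) (x : d.-tuple R) : R :=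
  (eta x - gridpt B l) ^+ 2.

Definition LSE (R : realType) (n : nat) (beta : R) (w : 'I_n -> R) : R :=
  beta^-1 * ln (\sum_(j < n) expR (beta * w j)).

Definition softmax (R : realType) (n : nat) (w : 'I_n -> R) (j : 'I_n) : R :=
  expR (w j) / \sum_(i < n) expR (w i).

Definition score (dO : measure_display) (Omega : measurableType dO)
  (R : realType) (P : probability Omega R) (d K L : nat) (S : Omega -> 'I_K)
  (eta : d.-tuple R -> R) (tau : 'I_K -> d.-tuple R -> R) (B : R)
  (Lam V : 'M[R]_((2 * L).+1, K)) (l : 'I_(2 * L).+1) (x : d.-tuple R) : R :=
  \sum_(s < K) (Lam l s - V l s) * tfun P S tau s x - rfun B eta l x.

Definition Fobj (dO : measure_display) (Omega : measurableType dO)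
  (R : realType) (P : probability Omega R) (d K L : nat)
  (X : Omega -> d.-tuple R) (S : Omega -> 'I_K)
  (eta : d.-tuple R -> R) (tau : 'I_K -> d.-tuple R -> R) (B beta : R)
  (eps : 'I_K -> R) (Lam V : 'M[R]_((2 * L).+1, K)) : \bar R :=
  (\int[P]_w (LSE beta (fun l => score P S eta tau B Lam V l (X w)))%:E
   + (\sum_(l < (2 * L).+1) \sum_(s < K) (Lam l s + V l s) * eps s)%:E)%E.

Definition piLV (dO : measure_display) (Omega : measurableType dO)
  (R : realType) (P : probability Omega R) (d K L : nat) (S : Omega -> 'I_K)
  (eta : d.-tuple R -> R) (tau : 'I_K -> d.-tuple R -> R) (B beta : R)
  (Lam V : 'M[R]_((2 * L).+1, K)) (x : d.-tuple R) (l : 'I_(2 * L).+1) : R :=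
  softmax (fun l' => beta * score P S eta tau B Lam V l' x) l.

(* A randomized prediction supported on the grid {l B / L : l in [[L]]}:
   a Markov kernel from R^d concentrated on the grid, given by its masses
   pi x l at the grid points (measurable in x, nonnegative, summing to 1). *)
Definition grid_kernel (R : realType) (d L : nat)
  (pi : d.-tuple R -> 'I_(2 * L).+1 -> R) : Prop :=
  [/\ forall l, measurable_fun setT (fun x => pi x l),
      forall x l, 0 <= pi x l &
      forall x, \sum_(l < (2 * L).+1) pi x l = 1].

(* Risk R(pi) = E[ int (yhat - eta(X))^2 pi(dyhat | X) ]
   = E[ sum_l pi(l | X) r_l(X) ] for pi supported on the grid. *)
Definition risk (dO : measure_display) (Omega : measurableType dO)
  (R : realType) (P : probability Omega R) (d L : nat)
  (X : Omega -> d.-tuple R) (B : R) (eta : d.-tuple R -> R)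
  (pi : d.-tuple R -> 'I_(2 * L).+1 -> R) : \bar R :=
  (\int[P]_w (\sum_(l < (2 * L).+1) pi (X w) l * rfun B eta l (X w))%:E)%E.

(* U_s(pi, l) = | E[pi(l|X) | S = s] - E[pi(l|X)] |,
   with E[Z | S = s] = E[Z 1_{S = s}] / P(S = s). *)
Definition unfair (dO : measure_display) (Omega : measurableType dO)
  (R : realType) (P : probability Omega R) (d K L : nat)
  (X : Omega -> d.-tuple R) (S : Omega -> 'I_K)
  (pi : d.-tuple R -> 'I_(2 * L).+1 -> R) (s : 'I_K) (l : 'I_(2 * L).+1) : R :=
  `| fine (\int[P]_(w in S @^-1` [set s]) (pi (X w) l)%:E)%E / pS P S s
     - fine (\int[P]_w (pi (X w) l)%:E)%E |.

(* Along the ray [c |-> c (Lam, V)] the objective is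
   [F c = E[LSE_beta (c a - r)] + c C], where [a_l = <lam_l - nu_l, t(X)>] and
   [C = sum_l <lam_l + nu_l, eps>]. This function is convex and minimal at [c = 1]
   among [c >= 0], so its left derivative at [1] is nonpositive:
   [E <pi*, a> + C <= 0], with [pi*] the softmax prediction. On the other hand
   [E[pi(l|X) t_s(X)]] is the signed unfairness of [pi], so every fair [pi] has
   [E <pi, a> + C >= 0]. Finally, pointwise,
   [<pi, a - r> <= LSE_beta (a - r) <= <pi*, a - r> + log (2L+1) / beta];
   integrating and combining with the two slope inequalities bounds
   [E <pi*, r> - E <pi, r>] by [log (2L+1) / beta]. *)

From HB Require Import structures.
From mathcomp Require Import all_boot all_order all_algebra.
From mathcomp Require Import all_classical all_reals all_analysis.
From mathcomp Require Import measurable_realfun ring lra zify.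
Set Implicit Arguments. Unset Strict Implicit. Unset Printing Implicit Defensive.
Import Order.TTheory GRing.Theory Num.Theory.
Import numFieldNormedType.Exports.
Local Open Scope ring_scope.
Local Open Scope classical_set_scope.

Section LogSumExp.
Variable R : realType.

Lemma jensen_expR n (p h : 'I_n -> R) :
  (forall j, 0 <= p j) -> \sum_j p j = 1 ->
  expR (\sum_j p j * h j) <= \sum_j p j * expR (h j).
Proof.
move=> p0 p1; set m := \sum_j p j * h j.
(* exp lies above its tangent line at the mean [m] *)
have tangent j : p j * (expR m * (1 + (h j - m))) <= p j * expR (h j).
  apply: ler_wpM2l => //.
  have -> : expR (h j) = expR m * expR (h j - m) by rewrite -expRD; congr expR; ring.
  by rewrite ler_wpM2l ?expR_ge0 ?expR_ge1Dx.
apply: le_trans (ler_sum _ (fun j _ => tangent j)).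
rewrite (eq_bigr (fun j => expR m * p j + expR m * (p j * h j) - expR m * m * p j));
  last by move=> j _; ring.
rewrite sumrB big_split /= -!mulr_sumr p1 -/m; lra.
Qed.

Lemma prob_le1 n (p : 'I_n -> R) j :
  (forall j, 0 <= p j) -> \sum_j p j = 1 -> p j <= 1.
Proof. by move=> p0 <-; rewrite (bigD1 j) //= lerDl sumr_ge0. Qed.

Lemma sum_expR_gt0 n (w : 'I_n -> R) : (0 < n)%N -> 0 < \sum_j expR (w j).
Proof.
move=> n0; rewrite (bigD1 (Ordinal n0)) //= ltr_pwDl ?expR_gt0 //.
by rewrite sumr_ge0 // => i _; exact: expR_ge0.
Qed.

Lemma softmax_ge0 n (w : 'I_n -> R) j : 0 <= softmax w j.
Proof.
by rewrite /softmax divr_ge0 ?expR_ge0 // sumr_ge0 // => i _; exact: expR_ge0.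
Qed.

Lemma sum_softmax n (w : 'I_n -> R) : (0 < n)%N -> \sum_j softmax w j = 1.
Proof. by move=> n0; rewrite /softmax -mulr_suml divff // gt_eqF ?sum_expR_gt0. Qed.

Lemma softmax_le1 n (w : 'I_n -> R) j : softmax w j <= 1.
Proof.
apply: prob_le1; first exact: softmax_ge0.
exact/sum_softmax/(leq_ltn_trans (leq0n j) (ltn_ord j)).
Qed.

Lemma softmax_expR n (w : 'I_n -> R) j : (0 < n)%N ->
  softmax w j = expR (w j - ln (\sum_i expR (w i))).
Proof. by move=> n0; rewrite expRD expRN lnK ?posrE ?sum_expR_gt0. Qed.

Variable beta : R.
Hypothesis beta_gt0 : 0 < beta.

Lemma mean_le_LSE n (p w : 'I_n -> R) :
  (forall j, 0 <= p j) -> \sum_j p j = 1 -> \sum_j p j * w j <= LSE beta w.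
Proof.
move=> p0 p1.
have n0 : (0 < n)%N.
  by case: n p w p0 p1 => // p w _; rewrite big_ord0 => /eqP; rewrite eq_sym oner_eq0.
rewrite /LSE ler_pdivlMl // -[X in X <= _]expRK.
rewrite ler_ln ?posrE ?expR_gt0 ?sum_expR_gt0 // mulr_sumr.
under eq_bigr do rewrite mulrCA.
apply: le_trans (jensen_expR (fun j => beta * w j) p0 p1) _; apply: ler_sum => j _.
by rewrite ler_piMl ?expR_ge0 ?(prob_le1 _ p0 p1).
Qed.

Lemma LSE_convex n (w w' : 'I_n -> R) : (0 < n)%N ->
  LSE beta w + \sum_j softmax (fun l => beta * w l) j * (w' j - w j) <= LSE beta w'.
Proof.
move=> n0; rewrite /LSE.
set Z := \sum_j expR (beta * w j); set q := softmax (fun l => beta * w l).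
have Z0 : 0 < Z by exact: sum_expR_gt0.
have q0 j : 0 <= q j by exact: softmax_ge0.
have q1 : \sum_j q j = 1 by exact: sum_softmax.
(* reweight [w'] against the softmax of [w], then apply Jensen *)
have reweight : \sum_j expR (beta * w' j) = Z * \sum_j q j * expR (beta * (w' j - w j)).
  rewrite mulr_sumr; apply: eq_bigr => j _.
  rewrite /q /softmax -/Z mulrA mulrCA divff ?gt_eqF // mulr1 -expRD; congr expR; ring.
have jensen := jensen_expR (fun j => beta * (w' j - w j)) q0 q1.
have mean_gt0 : 0 < \sum_j q j * expR (beta * (w' j - w j)).
  exact: lt_le_trans (expR_gt0 _) jensen.
rewrite reweight lnM ?posrE // mulrDr lerD2l ler_pdivlMl //.
rewrite -[X in X <= _]expRK ler_ln ?posrE ?expR_gt0 //.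
by rewrite mulr_sumr; under eq_bigr do rewrite mulrCA.
Qed.

Lemma LSE_le_softmax_mean n (w : 'I_n -> R) : (0 < n)%N ->
  LSE beta w <= \sum_j softmax (fun l => beta * w l) j * w j + ln n%:R / beta.
Proof.
move=> n0; rewrite /LSE.
set Z := \sum_j expR (beta * w j); set q := softmax (fun l => beta * w l).
have Z0 : 0 < Z by exact: sum_expR_gt0.
have q1 : \sum_j q j = 1 by exact: sum_softmax.
have n_gt0 : 0 < n%:R :> R by rewrite ltr0n.
pose y j := Z * expR (- (beta * w j)) / n%:R.
(* Gibbs' inequality: average [ln (y j) <= y j - 1] against the weights [q] *)
have gibbs j : q j * (ln Z - beta * w j - ln n%:R) <= q j * (y j - 1).
  apply: ler_wpM2l; first exact: softmax_ge0.
  have y0 : 0 < y j by rewrite divr_gt0 // mulr_gt0 // expR_gt0.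
  have := le_ln1Dx (ltr_pwDl y0 (lexx (-1)) : -1 < y j - 1).
  rewrite addrC subrK lnM ?posrE ?mulr_gt0 ?expR_gt0 ?invr_gt0 //.
  by rewrite lnM ?posrE ?expR_gt0 // expRK lnV ?posrE.
have lhsE : \sum_j q j * (ln Z - beta * w j - ln n%:R) =
    ln Z - ln n%:R - beta * \sum_j q j * w j.
  rewrite (eq_bigr (fun j => (ln Z - ln n%:R) * q j - beta * (q j * w j)));
    last by move=> j _; ring.
  by rewrite sumrB -!mulr_sumr q1 mulr1.
have rhsE : \sum_j q j * (y j - 1) = 0.
  rewrite (eq_bigr (fun j => n%:R^-1 - q j)); last first.
    move=> j _; rewrite /q /softmax /y -/Z mulrBr mulr1; congr (_ - _).
    have ee : expR (beta * w j) * expR (- (beta * w j)) = 1 by rewrite -expRD subrr expR0.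
    by rewrite -[RHS]mul1r -ee; field; rewrite !gt_eqF ?expR_gt0.
  by rewrite sumrB q1 sumr_const card_ord -[_ *+ n]mulr_natr mulVf ?gt_eqF // subrr.
have : \sum_j q j * (ln Z - beta * w j - ln n%:R) <= \sum_j q j * (y j - 1).
  by apply: ler_sum => j _; exact: gibbs.
rewrite lhsE rhsE => h.
rewrite ler_pdivrMl // mulrDr mulrCA divff ?gt_eqF // mulr1; lra.
Qed.

Lemma normr_LSE_le n (w : 'I_n -> R) : (0 < n)%N ->
  `|LSE beta w| <= \sum_j `|w j| + ln n%:R / beta.
Proof.
move=> n0; set q := softmax (fun l => beta * w l).
have mean_le : `|\sum_j q j * w j| <= \sum_j `|w j|.
  apply: le_trans (ler_norm_sum _ _ _) _; apply: ler_sum => j _.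
  by rewrite normrM ger0_norm ?softmax_ge0 // ler_piMl ?softmax_le1.
have lb := mean_le_LSE w (softmax_ge0 (fun l => beta * w l)) (sum_softmax _ n0).
have ub := LSE_le_softmax_mean w n0.
have ln_ge0 : 0 <= ln n%:R / beta by rewrite divr_ge0 ?ln_ge0 ?ler1n // ltW.
move: mean_le; rewrite !ler_norml => /andP [h1 h2]; apply/andP; split; lra.
Qed.

End LogSumExp.


Local Notation Rintegrable P f := (P.-integrable setT (EFin \o f)).

Section Expectation.
Context d (T : measurableType d) (R : realType) (P : probability T R).
Local Notation E f := (\int[P]_x f x).

Lemma Rintegrable_le (f g : T -> R) : measurable_fun setT f -> Rintegrable P g ->
  (forall x, `|f x| <= g x) -> Rintegrable P f.
Proof.
move=> mf ig fg; apply: le_integrable ig => //; first exact/measurable_EFinP.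
move=> x _ /=; rewrite lee_fin (ger0_norm (le_trans (normr_ge0 _) (fg x))); exact: fg.
Qed.

Lemma Rintegrable_cst (c : R) : Rintegrable P (fun _ => c).
Proof. exact: finite_measure_integrable_cst. Qed.

Lemma RintegrableD (f g : T -> R) : Rintegrable P f -> Rintegrable P g ->
  Rintegrable P (fun x => f x + g x).
Proof. by move=> fi gi; exact: (integrableD _ fi gi). Qed.

Lemma RintegrableB (f g : T -> R) : Rintegrable P f -> Rintegrable P g ->
  Rintegrable P (fun x => f x - g x).
Proof. by move=> fi gi; exact: (integrableB _ fi gi). Qed.

Lemma RintegrableZl (c : R) (f : T -> R) : Rintegrable P f ->
  Rintegrable P (fun x => c * f x).
Proof. by move=> fi; exact: (integrableZl _ c fi). Qed.

Lemma Rintegrable_sum I (s : seq I) (f : I -> T -> R) :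
  (forall i, Rintegrable P (f i)) -> Rintegrable P (fun x => \sum_(i <- s) f i x).
Proof.
move=> fi; have -> : EFin \o (fun x => \sum_(i <- s) f i x) = fun x => \sum_(i <- s) (f i x)%:E.
  by apply/funext => x /=; rewrite sumEFin.
by apply: integrable_sum => // i _; exact: fi.
Qed.

Lemma Rintegrable_bdM (h f : T -> R) (M : R) : measurable_fun setT h ->
  (forall x, `|h x| <= M) -> Rintegrable P f -> Rintegrable P (fun x => h x * f x).
Proof.
move=> mh hM fi; apply: (@Rintegrable_le _ (fun x => M * `|f x|)).
- by apply: measurable_funM => //; case/integrableP: fi => /measurable_EFinP.
- exact/RintegrableZl/integrable_norm.
- by move=> x /=; rewrite normrM ler_wpM2r.
Qed.

Lemma Rintegral_cst_prob (c : R) : E (fun _ => c) = c.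
Proof.
rewrite Rintegral_cst // -[RHS]mulr1; congr (_ * _).
by rewrite -[1]/(fine 1%E); congr fine; exact: probability_setT.
Qed.

Lemma Rintegral_sum I (s : seq I) (f : I -> T -> R) :
  (forall i, Rintegrable P (f i)) ->
  E (fun x => \sum_(i <- s) f i x) = \sum_(i <- s) E (f i).
Proof.
move=> fi; elim: s => [|i s IH].
  by under eq_Rintegral do rewrite big_nil; rewrite big_nil Rintegral_cst_prob.
under eq_Rintegral do rewrite big_cons.
by rewrite RintegralD ?IH ?big_cons //; exact: Rintegrable_sum.
Qed.

Lemma integral_EFin (f : T -> R) : Rintegrable P f ->
  (\int[P]_x (f x)%:E)%E = (E f)%:E.
Proof. by move=> fi; rewrite fineK //; exact: integrable_fin_num. Qed.

Lemma normr_Rintegral_bdM (h f : T -> R) (e : R) : measurable_fun setT h ->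
  (forall x, `|h x| <= e) -> Rintegrable P f ->
  `|E (fun x => h x * f x)| <= e * E (fun x => `|f x|).
Proof.
move=> mh he fi; have hfi := Rintegrable_bdM mh he fi.
apply: le_trans (le_normr_Rintegral _ hfi) _ => //.
rewrite -RintegralZl //; last exact: integrable_norm.
apply: le_Rintegral => //; first exact: integrable_norm.
  exact/RintegrableZl/integrable_norm.
by move=> x _; rewrite normrM ler_wpM2r.
Qed.

Lemma ge0_integral_not_integrable (f : T -> R) : measurable_fun setT f ->
  (forall x, 0 <= f x) -> ~ Rintegrable P f -> (\int[P]_x (f x)%:E = +oo)%E.
Proof.
move=> mf f0 fNi; apply/eqP; rewrite eq_le leey /= leNgt; apply/negP => fin.
apply: fNi; apply/integrableP; split; first exact/measurable_EFinP.
by under eq_integral do rewrite /= ger0_norm ?f0 //.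
Qed.

End Expectation.

Section Staircase.
Variable R : realType.

Lemma sum_ord_ltn n m : \sum_(k < n) ((k < m)%N%:R : R) = (minn m n)%:R.
Proof.
elim: n => [|n IH]; first by rewrite big_ord0 minn0.
rewrite big_ord_recr /= IH -natrD; congr (_%:R).
by case: (ltnP n m) => h /=; lia.
Qed.

(* For [0 <= y <= 1], [stair n y = floor (n y) / n]. *)
Definition stair (n : nat) (y : R) : R :=
  n%:R^-1 * \sum_(k < n) (k.+1%:R / n%:R <= y)%R%:R.

Lemma stair_approx n y : (0 < n)%N -> 0 <= y <= 1 -> 0 <= y - stair n y <= n%:R^-1.
Proof.
move=> n0 /andP [y0 y1]; have n_gt0 : 0 < n%:R :> R by rewrite ltr0n.
set m := Num.truncn (n%:R * y).
have ny0 : 0 <= n%:R * y by rewrite mulr_ge0 // ltW.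
have [m_le m_gt] : m%:R <= n%:R * y /\ n%:R * y < m.+1%:R :> R.
  by have /andP [] := truncn_itv ny0.
have mn : (m <= n)%N.
  rewrite truncn_le_nat; apply: (@le_lt_trans _ _ n%:R); last by rewrite ltr_nat.
  by rewrite ler_piMr // ltW.
rewrite /stair (eq_bigr (fun k : 'I_n => ((k < m)%N%:R : R))); last first.
  by move=> k _; rewrite ler_pdivrMr // mulrC truncn_gt_nat.
rewrite sum_ord_ltn (minn_idPl mn); rewrite -natr1 in m_gt.
rewrite subr_ge0 ler_pdivrMl //= lerBlDr -lerBlDl ler_pdivlMl // mulrBr divff ?gt_eqF //.
lra.
Qed.

Lemma stair_indic n y :
  stair n y = n%:R^-1 * \sum_(k < n) \1_(`[(k.+1%:R / n%:R : R), +oo[) y.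
Proof.
congr (_ * _); apply: eq_bigr => k _; rewrite indicE.
rewrite (_ : (y \in _) = (k.+1%:R / n%:R <= y)%R) //.
by apply/idP/idP => [/set_mem|h]; [|apply: mem_set]; rewrite /= in_itv /= andbT.
Qed.

Lemma measurable_stair n : measurable_fun setT (stair n).
Proof.
rewrite (funext (@stair_indic n)); apply: measurable_funM => //.
by apply: measurable_sum => k; apply: measurable_indic; exact: measurable_itv.
Qed.

Lemma eq0_le_div_nat (x c : R) : (forall n, (0 < n)%N -> `|x| <= c / n%:R) -> x = 0.
Proof.
move=> xc; apply/normr0_eq0/eqP; rewrite eq_le normr_ge0 andbT.
apply/ler_addgt0Pr => e e0; rewrite add0r.
set n := (Num.truncn (c / e)).+1.
have n_gt0 : 0 < n%:R :> R by rewrite ltr0n.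
apply: le_trans (xc n isT) _; rewrite ler_pdivrMr //.
by have := truncnS_gt (c / e); rewrite ltr_pdivrMr // mulrC => /ltW.
Qed.

End Staircase.

Section ConditionalExpectation.
Context dO (Omega : measurableType dO) (R : realType) (P : probability Omega R)
  dT (T : measurableType dT) (X : Omega -> T) (Z : Omega -> R) (tau : T -> R).
Hypotheses (mX : measurable_fun setT X) (Zi : Rintegrable P Z)
  (ce : is_cond_exp P X Z tau).
Local Notation E f := (\int[P]_w f w).

Lemma cond_exp_indic A : measurable A ->
  E (fun w => \1_A (X w) * Z w) = E (fun w => \1_A (X w) * tau (X w)).
Proof.
move=> mA; case: ce => _ _ /(_ A mA) /(congr1 fine) ce_A.
have restrict (f : Omega -> R) :
    E (fun w => \1_A (X w) * f w) = \int[P]_(w in X @^-1` A) f w.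
  rewrite [RHS]Rintegral_mkcond; apply: eq_Rintegral => w _.
  rewrite patchE indicE /=; case: (boolP (X w \in A)) => XwA.
    by rewrite mem_set ?mul1r //; exact: set_mem XwA.
  by rewrite memNset ?mul0r // => /mem_set; apply/negP.
by rewrite restrict (restrict (fun w => tau (X w))).
Qed.

Lemma cond_exp_stair (g : T -> R) n : measurable_fun setT g ->
  E (fun w => stair n (g (X w)) * Z w) = E (fun w => stair n (g (X w)) * tau (X w)).
Proof.
move=> mg; pose I (k : 'I_n) := g @^-1` `[(k.+1%:R / n%:R : R), +oo[.
have mI k : measurable (I k).
  by rewrite -[I k]setTI; apply: mg => //; exact: measurable_itv.
have expand f : Rintegrable P f -> E (fun w => stair n (g (X w)) * f w) =
    n%:R^-1 * \sum_(k < n) E (fun w => \1_(I k) (X w) * f w).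
  move=> fi; have indic_fi k : Rintegrable P (fun w => \1_(I k) (X w) * f w).
    apply: (@Rintegrable_bdM _ _ _ _ _ _ 1) fi.
      exact/measurableT_comp/mX/measurable_indic.
    by move=> w; rewrite indicE; case: (_ \in _); rewrite ?normr1 ?normr0.
  rewrite -Rintegral_sum // -RintegralZl //; last exact: Rintegrable_sum.
  by apply: eq_Rintegral => w _; rewrite stair_indic -mulrA mulr_suml.
have tauXi : Rintegrable P (fun w => tau (X w)) by case: ce.
by rewrite !expand //; congr (_ * _); apply: eq_bigr => k _; exact: cond_exp_indic.
Qed.

(* The defining identity of [tau], stated for indicators, extends to bounded
   test functions by staircase approximation. *)
Lemma cond_exp_bounded (g : T -> R) : measurable_fun setT g ->
  (forall x, 0 <= g x <= 1) ->
  E (fun w => g (X w) * Z w) = E (fun w => g (X w) * tau (X w)).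
Proof.
move=> mg g01; have tauXi : Rintegrable P (fun w => tau (X w)) by case: ce.
apply/eqP; rewrite -subr_eq0; apply/eqP.
apply: (@eq0_le_div_nat _ _ (E (fun w => `|Z w|) + E (fun w => `|tau (X w)|))) => n n0.
pose s w := stair n (g (X w)).
have ms : measurable_fun setT s.
  exact: measurableT_comp (measurable_stair n) (measurableT_comp mg mX).
have mgs : measurable_fun setT (fun w => g (X w) - s w).
  by apply: measurable_funB => //; exact: measurableT_comp.
have n_inv_le1 : n%:R^-1 <= 1 :> R by rewrite invf_le1 ?ltr0n ?ler1n.
have err w : `|g (X w) - s w| <= n%:R^-1.
  by have /andP [s_le s_ge] := stair_approx n0 (g01 (X w)); rewrite ger0_norm.
have s_le1 w : `|s w| <= 1.
  have /andP [s_le s_ge] := stair_approx n0 (g01 (X w)).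
  have /andP [g0 g1] := g01 (X w); rewrite /s ler_norml; apply/andP; split; lra.
have split f : Rintegrable P f -> E (fun w => g (X w) * f w) =
    E (fun w => (g (X w) - s w) * f w) + E (fun w => s w * f w).
  move=> fi; rewrite -RintegralD //.
  - by apply: eq_Rintegral => w _; ring.
  - exact: (Rintegrable_bdM mgs err).
  - exact: (Rintegrable_bdM ms s_le1).
rewrite (split Z) // (split _ tauXi) // cond_exp_stair // [Y in _ - Y]addrC addrKA.
rewrite mulrDl ![_ * n%:R^-1]mulrC; apply: le_trans (ler_normB _ _) _.
by apply: lerD; exact: normr_Rintegral_bdM.
Qed.

End ConditionalExpectation.

Section Grid.
Variables (R : realType) (d L : nat) (B : R) (eta : d.-tuple R -> R).
Hypothesis B_ge0 : 0 <= B.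

Lemma normr_gridpt_le (l : 'I_(2 * L).+1) : `|gridpt B l| <= B.
Proof.
rewrite /gridpt; have [->|L_neq0] := eqVneq (L%:R : R) 0.
  by rewrite invr0 mulr0 normr0.
have L0 : 0 < L%:R :> R by rewrite lt_def L_neq0 ler0n.
rewrite !normrM normfV (ger0_norm B_ge0) (ger0_norm (ltW L0)).
rewrite ler_pdivrMr // mulrC ler_wpM2l // ler_norml.
have l_le : l%:R <= (2 * L)%:R :> R by rewrite ler_nat -ltnS.
rewrite natrM in l_le; have : 0 <= l%:R :> R by [].
by move=> l_ge; apply/andP; split; lra.
Qed.

Lemma rfun_le (l : 'I_(2 * L).+1) x : rfun B eta l x <= 2 * eta x ^+ 2 + 2 * B ^+ 2.
Proof.
have := normr_gridpt_le l; rewrite /rfun ler_norml => /andP [g1 g2].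
have : 0 <= (eta x + gridpt B l) ^+ 2 by exact: sqr_ge0.
nra.
Qed.

Lemma rfun_ge (l : 'I_(2 * L).+1) x : eta x ^+ 2 / 2 - B ^+ 2 <= rfun B eta l x.
Proof.
have := normr_gridpt_le l; rewrite /rfun ler_norml => /andP [g1 g2].
have : 0 <= (eta x - 2 * gridpt B l) ^+ 2 by exact: sqr_ge0.
nra.
Qed.

End Grid.

Lemma cvg_softmax_mean (R : realType) n (beta : R) (a b : 'I_n -> R) (c_ : nat -> R) (c : R) :
  (0 < n)%N -> c_ k @[k --> \oo] --> c ->
  (\sum_l softmax (fun l => beta * (c_ k * a l - b l)) l * a l) @[k --> \oo] -->
  \sum_l softmax (fun l => beta * (c * a l - b l)) l * a l.
Proof.
move=> n0 cc.
have cvg_sum (f : 'I_n -> nat -> R) g : (forall i, f i k @[k --> \oo] --> g i) ->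
    (\sum_i f i k) @[k --> \oo] --> \sum_i g i.
  by move=> fg; apply: cvg_big => //; exact: add_continuous.
have cvg_exp i : expR (beta * (c_ k * a i - b i)) @[k --> \oo] --> expR (beta * (c * a i - b i)).
  apply: continuous_cvg; first exact: continuous_expR.
  by apply: cvgMr; apply: cvgB; [exact: cvgMl | exact: cvg_cst].
apply: (cvg_sum) => l; apply: cvgMl; apply: cvgM; first exact: cvg_exp.
by apply: cvgV; [rewrite gt_eqF ?sum_expR_gt0 | exact: cvg_sum].
Qed.

Section FairRegression.
Context (R : realType) (dO : measure_display) (Omega : measurableType dO)
  (P : probability Omega R) (d K L : nat)
  (X : Omega -> d.-tuple R) (S : Omega -> 'I_K)
  (eta : d.-tuple R -> R) (tau : 'I_K -> d.-tuple R -> R)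
  (B beta : R) (eps : 'I_K -> R) (Lam V : 'M[R]_((2 * L).+1, K)).
Hypotheses (B_gt0 : 0 < B) (beta_gt0 : 0 < beta)
  (mX : measurable_fun setT X) (meta : measurable_fun setT eta)
  (mS : forall s, measurable (S @^-1` [set s]))
  (pS_pos : forall s, (0 < P (S @^-1` [set s]))%E)
  (ce_tau : forall s, is_cond_exp P X (fun w => (S w == s)%:R) (tau s))
  (Lam_ge0 : forall l s, 0 <= Lam l s) (V_ge0 : forall l s, 0 <= V l s)
  (Fmin : forall Lam' V' : 'M[R]_((2 * L).+1, K),
     (forall l s, 0 <= Lam' l s) -> (forall l s, 0 <= V' l s) ->
     (Fobj P X S eta tau B beta eps Lam V <= Fobj P X S eta tau B beta eps Lam' V')%E).

Local Notation N := (2 * L).+1.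
Local Notation E f := (\int[P]_w f w).

Definition dual_score (l : 'I_N) x := \sum_s (Lam l s - V l s) * tfun P S tau s x.
Definition dual_penalty := \sum_(l < N) \sum_s (Lam l s + V l s) * eps s.
Definition ray_score c (l : 'I_N) x := c * dual_score l x - rfun B eta l x.
Definition ray_softmax c x (l : 'I_N) := softmax (fun l => beta * ray_score c l x) l.

Lemma pS_gt0 s : 0 < pS P S s.
Proof.
apply: fine_gt0; rewrite pS_pos /=.
by apply: le_lt_trans (probability_le1 _ (mS s)) _; rewrite ltey.
Qed.

Lemma measurable_tfun s : measurable_fun setT (fun w => tfun P S tau s (X w)).
Proof.
apply: measurable_funB => //; apply: measurable_funM => //.
by apply: measurableT_comp mX; case: (ce_tau s).
Qed.

Lemma measurable_rfun (l : 'I_N) : measurable_fun setT (fun w => rfun B eta l (X w)).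
Proof. by apply/measurable_funX/measurable_funB => //; exact: measurableT_comp. Qed.

Lemma measurable_dual_score l : measurable_fun setT (fun w => dual_score l (X w)).
Proof.
apply: measurable_sum => s; apply: measurable_funM => //; exact: measurable_tfun.
Qed.

Lemma measurable_ray_score c l : measurable_fun setT (fun w => ray_score c l (X w)).
Proof.
apply: measurable_funB; last exact: measurable_rfun.
by apply: measurable_funM => //; exact: measurable_dual_score.
Qed.

Lemma measurable_sum_expR_ray c :
  measurable_fun setT (fun w => \sum_l expR (beta * ray_score c l (X w))).
Proof.
apply: measurable_sum => l; apply: measurableT_comp; first exact: measurable_expR.
by apply: measurable_funM => //; exact: measurable_ray_score.
Qed.

Lemma measurable_ray_LSE c :
  measurable_fun setT (fun w => LSE beta (fun l => ray_score c l (X w))).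
Proof.
apply: measurable_funM => //; apply: measurableT_comp; first exact: measurable_ln.
exact: measurable_sum_expR_ray.
Qed.

Lemma measurable_ray_softmax c l :
  measurable_fun setT (fun w => ray_softmax c (X w) l).
Proof.
rewrite /ray_softmax; under eq_fun do rewrite softmax_expR //.
apply: measurableT_comp; first exact: measurable_expR.
apply: measurable_funB; first by apply: measurable_funM => //; exact: measurable_ray_score.
apply: measurableT_comp; first exact: measurable_ln.
exact: measurable_sum_expR_ray.
Qed.

Lemma score_ray c l x : score P S eta tau B (c *: Lam) (c *: V) l x = ray_score c l x.
Proof.
rewrite /score /ray_score /dual_score mulr_sumr.
apply: congr2; last by [].
by apply: eq_bigr => s _; rewrite !mxE; ring.
Qed.

Lemma piLV_ray x l : piLV P S eta tau B beta Lam V x l = ray_softmax 1 x l.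
Proof.
rewrite /piLV /ray_softmax.
have -> : (fun l' => beta * score P S eta tau B Lam V l' x) =
    (fun l' => beta * ray_score 1 l' x).
  by apply/funext => l'; rewrite -score_ray !scale1r.
by [].
Qed.

Section SquareIntegrable.
Hypothesis eta2i : Rintegrable P (fun w => eta (X w) ^+ 2).

Lemma Rintegrable_tfun s : Rintegrable P (fun w => tfun P S tau s (X w)).
Proof.
have -> : (fun w => tfun P S tau s (X w)) = fun w => 1 - (pS P S s)^-1 * tau s (X w).
  by apply/funext => w; rewrite /tfun mulrC.
by apply/RintegrableB/RintegrableZl; [exact: Rintegrable_cst | case: (ce_tau s)].
Qed.

Lemma Rintegrable_rfun (l : 'I_N) : Rintegrable P (fun w => rfun B eta l (X w)).
Proof.
apply: (Rintegrable_le (measurable_rfun l)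
  (RintegrableD (RintegrableZl 2 eta2i) (Rintegrable_cst P (2 * B ^+ 2)))).
by move=> w /=; rewrite ger0_norm ?sqr_ge0 // rfun_le // ltW.
Qed.

Lemma Rintegrable_dual_score l : Rintegrable P (fun w => dual_score l (X w)).
Proof. by apply: Rintegrable_sum => s; apply: RintegrableZl; exact: Rintegrable_tfun. Qed.

Lemma Rintegrable_ray_score c l : Rintegrable P (fun w => ray_score c l (X w)).
Proof.
by apply: RintegrableB; [apply: RintegrableZl; exact: Rintegrable_dual_score |
  exact: Rintegrable_rfun].
Qed.

Lemma Rintegrable_ray_LSE c :
  Rintegrable P (fun w => LSE beta (fun l => ray_score c l (X w))).
Proof.
apply: (Rintegrable_le (measurable_ray_LSE c)); last first.
  by move=> w; exact: normr_LSE_le.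
apply/RintegrableD/Rintegrable_cst/Rintegrable_sum => l.
exact/integrable_norm/Rintegrable_ray_score.
Qed.

Lemma Rintegrable_kernel_mean (q : d.-tuple R -> 'I_N -> R) (f : 'I_N -> d.-tuple R -> R) :
  (forall l, measurable_fun setT (fun w => q (X w) l)) -> (forall x l, `|q x l| <= 1) ->
  (forall l, Rintegrable P (fun w => f l (X w))) ->
  Rintegrable P (fun w => \sum_l q (X w) l * f l (X w)).
Proof. by move=> mq q1 fi; apply: Rintegrable_sum => l; exact: Rintegrable_bdM. Qed.

Lemma normr_ray_softmax_le1 c x l : `|ray_softmax c x l| <= 1.
Proof. by rewrite ger0_norm ?softmax_ge0 ?softmax_le1. Qed.

Lemma Fobj_ray (c : R) : Fobj P X S eta tau B beta eps (c *: Lam) (c *: V) =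
  (E (fun w => LSE beta (fun l => ray_score c l (X w))) + c * dual_penalty)%:E.
Proof.
have scoreE w : (fun l => score P S eta tau B (c *: Lam) (c *: V) l (X w)) =
    (fun l => ray_score c l (X w)).
  by apply/funext => l; exact: score_ray.
rewrite /Fobj; under eq_integral do rewrite scoreE.
rewrite integral_EFin; last exact: Rintegrable_ray_LSE.
suff -> : \sum_l \sum_s ((c *: Lam) l s + (c *: V) l s) * eps s = c * dual_penalty by [].
rewrite /dual_penalty mulr_sumr; apply: eq_bigr => l _.
by rewrite mulr_sumr; apply: eq_bigr => s _; rewrite !mxE; ring.
Qed.

Lemma ray_min (c : R) : 0 <= c ->
  E (fun w => LSE beta (fun l => ray_score 1 l (X w))) + dual_penalty <=
  E (fun w => LSE beta (fun l => ray_score c l (X w))) + c * dual_penalty.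
Proof.
move=> c0; have F1 := Fobj_ray 1; rewrite !scale1r mul1r in F1.
have := @Fmin (c *: Lam) (c *: V); rewrite F1 Fobj_ray lee_fin.
by apply => l s; rewrite mxE mulr_ge0.
Qed.

Lemma ray_slope_lt1 (c : R) : 0 <= c < 1 ->
  E (fun w => \sum_l ray_softmax c (X w) l * dual_score l (X w)) + dual_penalty <= 0.
Proof.
move=> /andP [c0 c1]; have c1_gt0 : 0 < 1 - c by rewrite subr_gt0.
set D := E (fun w => \sum_l ray_softmax c (X w) l * dual_score l (X w)).
have Di : Rintegrable P (fun w => \sum_l ray_softmax c (X w) l * dual_score l (X w)).
  apply: Rintegrable_kernel_mean; [exact: measurable_ray_softmax |
    exact: normr_ray_softmax_le1 | exact: Rintegrable_dual_score].
have grad : E (fun w => LSE beta (fun l => ray_score c l (X w))) + (1 - c) * D <=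
    E (fun w => LSE beta (fun l => ray_score 1 l (X w))).
  have LSEi := Rintegrable_ray_LSE.
  rewrite /D -RintegralZl // -RintegralD //; last exact: RintegrableZl.
  apply: le_Rintegral => //; first exact: RintegrableD (LSEi c) (RintegrableZl _ Di).
  move=> w _; rewrite mulr_sumr (eq_bigr (fun l => ray_softmax c (X w) l *
    (ray_score 1 l (X w) - ray_score c l (X w)))); first exact: LSE_convex.
  by move=> l _; rewrite /ray_score; ring.
have min := ray_min c0; have : (1 - c) * (D + dual_penalty) <= 0 by lra.
by rewrite pmulr_rle0.
Qed.

Lemma ray_slope_1 :
  E (fun w => \sum_l ray_softmax 1 (X w) l * dual_score l (X w)) + dual_penalty <= 0.
Proof.
pose c_ n : R := 1 - n.+1%:R^-1.
have c_itv n : 0 <= c_ n < 1.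
  have inv_gt0 : 0 < n.+1%:R^-1 :> R by rewrite invr_gt0 ltr0n.
  have inv_le1 : n.+1%:R^-1 <= 1 :> R by rewrite invf_le1 ?ltr0n // ler1n.
  by rewrite /c_ subr_ge0 inv_le1 /= ltrBlDr ltrDl.
have c_cvg : c_ n @[n --> \oo] --> (1 : R).
  by rewrite -[X in _ --> X]subr0; apply: cvgB; [exact: cvg_cst | exact: cvg_harmonic].
pose u c w := \sum_l ray_softmax c (X w) l * dual_score l (X w).
pose G w := \sum_l `|dual_score l (X w)|.
have mu c : measurable_fun setT (fun w => (u c w)%:E).
  apply/measurable_EFinP/measurable_sum => l.
  by apply: measurable_funM; [exact: measurable_ray_softmax | exact: measurable_dual_score].
have ui c : Rintegrable P (u c).
  apply: Rintegrable_kernel_mean; [exact: measurable_ray_softmax |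
    exact: normr_ray_softmax_le1 | exact: Rintegrable_dual_score].
have Gi : Rintegrable P G.
  by apply: Rintegrable_sum => l; exact/integrable_norm/Rintegrable_dual_score.
have u_bd n w : (`|(u (c_ n) w)%:E| <= (G w)%:E)%E.
  rewrite /= lee_fin; apply: le_trans (ler_norm_sum _ _ _) _; apply: ler_sum => l _.
  by rewrite normrM ler_piMl ?normr_ray_softmax_le1.
have u_cvg w : (u (c_ n) w)%:E @[n --> \oo] --> (u 1 w)%:E.
  have := cvg_softmax_mean (beta := beta) (a := fun l => dual_score l (X w))
    (b := fun l => rfun B eta l (X w)) (isT : (0 < N)%N) c_cvg.
  by move=> cvg_u; apply: cvg_EFin; [exact: nearW | exact: cvg_u].
have [_ _ u_lim] := @dominated_convergence _ _ _ P setT measurableT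
  (fun n w => (u (c_ n) w)%:E) (fun w => (u 1 w)%:E) (fun w => (G w)%:E)
  (fun n => mu (c_ n)) (mu 1) (aeW _ (fun w _ => u_cvg w)) Gi
  (aeW _ (fun w n _ => u_bd n w)).
suff : E (u 1) <= - dual_penalty by rewrite /u; lra.
rewrite -lee_fin -integral_EFin // -(cvg_lim (@ereal_hausdorff R) u_lim).
apply: lime_le; first by apply/cvg_ex; exists (\int[P]_w (u 1 w)%:E)%E.
apply: nearW => n /=; rewrite integral_EFin // lee_fin.
by have := ray_slope_lt1 (c_itv n); rewrite /u; lra.
Qed.

Section GridKernel.
Variable pi : d.-tuple R -> 'I_N -> R.
Hypothesis pi_kernel : grid_kernel pi.

Lemma measurable_kernel l : measurable_fun setT (fun w => pi (X w) l).
Proof. by case: pi_kernel => m _ _; exact: measurableT_comp (m l) mX. Qed.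

Lemma kernel_itv x l : 0 <= pi x l <= 1.
Proof. by case: pi_kernel => _ p0 p1; rewrite p0 (prob_le1 _ (p0 x)). Qed.

Lemma normr_kernel_le1 x l : `|pi x l| <= 1.
Proof. by have /andP [p0 p1] := kernel_itv x l; rewrite ger0_norm. Qed.

Lemma Rintegrable_kernel l : Rintegrable P (fun w => pi (X w) l).
Proof.
apply: (Rintegrable_le (measurable_kernel l) (Rintegrable_cst P 1)) => w.
exact: normr_kernel_le1.
Qed.

Lemma Rintegrable_kernelM l (f : Omega -> R) : Rintegrable P f ->
  Rintegrable P (fun w => pi (X w) l * f w).
Proof. exact: Rintegrable_bdM (measurable_kernel l) (fun w => normr_kernel_le1 (X w) l). Qed.

Lemma unfair_tfun l s :
  unfair P X S pi s l = `|E (fun w => pi (X w) l * tfun P S tau s (X w))|.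
Proof.
pose Zs w : R := (S w == s)%:R.
have Zs_indic : Zs = \1_(S @^-1` [set s]).
  apply/funext => w; rewrite /Zs indicE; congr (nat_of_bool _)%:R.
  by apply/idP/idP => [/eqP Sw|/set_mem /= ->//]; exact: mem_set.
have mZs : measurable_fun setT Zs by rewrite Zs_indic; exact: measurable_indic.
have Zsi : Rintegrable P Zs.
  apply: (Rintegrable_le mZs (Rintegrable_cst P 1)) => w.
  by rewrite /Zs; case: (_ == _); rewrite ?normr1 ?normr0.
have mpi : measurable_fun setT (fun x => pi x l) by case: pi_kernel.
have ce := cond_exp_bounded mX Zsi (ce_tau s) mpi (kernel_itv^~ l).
have restrictE : fine (\int[P]_(w in S @^-1` [set s]) (pi (X w) l)%:E)%E =
    E (fun w => pi (X w) l * Zs w).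
  rewrite -[LHS]/(Rintegral P _ _) Rintegral_mkcond; apply: eq_Rintegral => w _.
  by rewrite Zs_indic indicE patchE; case: (_ \in _); rewrite ?mulr1 ?mulr0.
have tfunE : (fun w => pi (X w) l * tfun P S tau s (X w)) =
    (fun w => pi (X w) l - (pS P S s)^-1 * (pi (X w) l * tau s (X w))).
  by apply/funext => w; rewrite /tfun; field; rewrite gt_eqF ?pS_gt0.
have pi_taui : Rintegrable P (fun w => pi (X w) l * tau s (X w)).
  by apply: Rintegrable_kernelM; case: (ce_tau s).
have pii := Rintegrable_kernel l.
rewrite /unfair restrictE ce tfunE RintegralB //; last exact: RintegrableZl.
by rewrite RintegralZl // mulrC distrC.
Qed.

Hypothesis pi_fair : forall l s, unfair P X S pi s l <= eps s.

Lemma fair_dual_ge0 :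
  0 <= E (fun w => \sum_l pi (X w) l * dual_score l (X w)) + dual_penalty.
Proof.
have dualE : E (fun w => \sum_l pi (X w) l * dual_score l (X w)) =
    \sum_l \sum_s (Lam l s - V l s) * E (fun w => pi (X w) l * tfun P S tau s (X w)).
  rewrite Rintegral_sum => [|l]; last exact/Rintegrable_kernelM/Rintegrable_dual_score.
  apply: eq_bigr => l _.
  rewrite (eq_bigr (fun s => E (fun w => (Lam l s - V l s) *
    (pi (X w) l * tfun P S tau s (X w))))); last first.
    by move=> s _; rewrite RintegralZl //; exact/Rintegrable_kernelM/Rintegrable_tfun.
  rewrite -Rintegral_sum => [|s]; last exact/RintegrableZl/Rintegrable_kernelM/Rintegrable_tfun.
  apply: eq_Rintegral => w _; rewrite /dual_score mulr_sumr.
  by apply: eq_bigr => s _; ring.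
rewrite dualE /dual_penalty -big_split /=; apply: sumr_ge0 => l _.
rewrite -big_split /=; apply: sumr_ge0 => s _.
have := pi_fair l s; rewrite unfair_tfun ler_norml => /andP [u_ge u_le].
set u := E (fun w => pi (X w) l * tfun P S tau s (X w)) in u_ge u_le *.
have : 0 <= Lam l s * (eps s + u) by apply: mulr_ge0 => //; lra.
have : 0 <= V l s * (eps s - u) by apply: mulr_ge0 => //; lra.
lra.
Qed.

Lemma risk_gap :
  E (fun w => \sum_l ray_softmax 1 (X w) l * rfun B eta l (X w)) <=
  E (fun w => \sum_l pi (X w) l * rfun B eta l (X w)) + ln N%:R / beta.
Proof.
have meanE (q : d.-tuple R -> 'I_N -> R) :
    (forall l, measurable_fun setT (fun w => q (X w) l)) -> (forall x l, `|q x l| <= 1) ->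
    E (fun w => \sum_l q (X w) l * ray_score 1 l (X w)) =
    E (fun w => \sum_l q (X w) l * dual_score l (X w)) -
    E (fun w => \sum_l q (X w) l * rfun B eta l (X w)).
  move=> mq q1; rewrite -RintegralB //; last 2 first.
  - exact: Rintegrable_kernel_mean mq q1 Rintegrable_dual_score.
  - exact: Rintegrable_kernel_mean mq q1 Rintegrable_rfun.
  apply: eq_Rintegral => w _; rewrite -sumrB; apply: eq_bigr => l _.
  by rewrite /ray_score; ring.
have softmax_meani := Rintegrable_kernel_mean (measurable_ray_softmax 1)
  (normr_ray_softmax_le1 1).
have LSEi := Rintegrable_ray_LSE 1.
have lower : E (fun w => \sum_l pi (X w) l * ray_score 1 l (X w)) <=
    E (fun w => LSE beta (fun l => ray_score 1 l (X w))).
  apply: le_Rintegral => //.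
    exact: Rintegrable_kernel_mean measurable_kernel normr_kernel_le1 (Rintegrable_ray_score 1).
  move=> w _; case: pi_kernel => _ p0 p1; exact: mean_le_LSE.
have upper : E (fun w => LSE beta (fun l => ray_score 1 l (X w))) <=
    E (fun w => \sum_l ray_softmax 1 (X w) l * ray_score 1 l (X w)) + ln N%:R / beta.
  rewrite -[Y in _ <= _ + Y](Rintegral_cst_prob P) -RintegralD //; last 2 first.
  - exact: softmax_meani (Rintegrable_ray_score 1).
  - exact: Rintegrable_cst.
  apply: le_Rintegral => //.
    by apply: RintegrableD; [exact: softmax_meani (Rintegrable_ray_score 1) |
      exact: Rintegrable_cst].
  move=> w _; exact: LSE_le_softmax_mean.
rewrite (meanE _ measurable_kernel normr_kernel_le1) in lower.
rewrite (meanE _ (measurable_ray_softmax 1) (normr_ray_softmax_le1 1)) in upper.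
have := ray_slope_1; have := fair_dual_ge0; lra.
Qed.
End GridKernel.
End SquareIntegrable.

Lemma Rintegrable_eta2 (pi : d.-tuple R -> 'I_N -> R) : grid_kernel pi ->
  Rintegrable P (fun w => \sum_l pi (X w) l * rfun B eta l (X w)) ->
  Rintegrable P (fun w => eta (X w) ^+ 2).
Proof.
case=> _ p0 p1 ri.
apply: (Rintegrable_le _ (RintegrableD (RintegrableZl 2 ri) (Rintegrable_cst P (2 * B ^+ 2)))).
  exact/measurable_funX/measurableT_comp.
move=> w /=; rewrite ger0_norm ?sqr_ge0 //.
have : eta (X w) ^+ 2 / 2 - B ^+ 2 <= \sum_l pi (X w) l * rfun B eta l (X w).
  rewrite -[leLHS]mul1r -[Y in Y * _](p1 (X w)) mulr_suml; apply: ler_sum => l _.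
  by apply: ler_wpM2l; [exact: p0 | exact: rfun_ge eta (ltW B_gt0) l (X w)].
lra.
Qed.

Lemma risk_softmax_le (pi : d.-tuple R -> 'I_N -> R) :
  grid_kernel pi -> (forall l s, unfair P X S pi s l <= eps s) ->
  (risk P X B eta (piLV P S eta tau B beta Lam V) <=
   risk P X B eta pi + (ln N%:R / beta)%:E)%E.
Proof.
move=> pi_kernel pi_fair; rewrite /risk.
under eq_integral => w _ do under eq_bigr => l _ do rewrite piLV_ray.
have [ri|rNi] := pselect (Rintegrable P (fun w => \sum_l pi (X w) l * rfun B eta l (X w))).
- have eta2i := Rintegrable_eta2 pi_kernel ri.
  rewrite !integral_EFin // -?EFinD ?lee_fin; first exact: risk_gap.
  exact: Rintegrable_kernel_mean (measurable_ray_softmax 1) (normr_ray_softmax_le1 1)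
    (Rintegrable_rfun eta2i).
- rewrite (ge0_integral_not_integrable _ _ rNi) ?addye ?leey //.
  + apply: measurable_sum => l; apply: measurable_funM; last exact: measurable_rfun.
    exact: measurable_kernel.
  + move=> w; apply: sumr_ge0 => l _; apply: mulr_ge0; last exact: sqr_ge0.
    by have /andP [] := kernel_itv pi_kernel (X w) l.
Qed.

End FairRegression.

Theorem lemma3p3 (R : realType) (dO : measure_display) (Omega : measurableType dO)
  (P : probability Omega R) (d K L : nat)
  (X : Omega -> d.-tuple R) (S : Omega -> 'I_K) (Y : Omega -> R)
  (eta : d.-tuple R -> R) (tau : 'I_K -> d.-tuple R -> R)
  (B beta : R) (eps : 'I_K -> R)
  (Lam V : 'M[R]_((2 * L).+1, K)) :
  (2 <= K)%N -> (1 <= d)%N -> (1 <= L)%N ->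
  0 < B -> 0 < beta -> (forall s, 0 <= eps s <= 1) ->
  measurable_fun setT X -> measurable_fun setT Y ->
  (forall s, measurable (S @^-1` [set s])) ->
  P.-integrable setT (fun w => (Y w ^+ 2)%:E) ->
  (forall s, (0 < P (S @^-1` [set s]))%E) ->
  is_cond_exp P X Y eta ->
  (forall s, is_cond_exp P X (fun w => (S w == s)%:R) (tau s)) ->
  (forall l s, 0 <= Lam l s) -> (forall l s, 0 <= V l s) ->
  (forall Lam' V' : 'M[R]_((2 * L).+1, K),
     (forall l s, 0 <= Lam' l s) -> (forall l s, 0 <= V' l s) ->
     (Fobj P X S eta tau B beta eps Lam V <= Fobj P X S eta tau B beta eps Lam' V')%E) ->
  forall pi : d.-tuple R -> 'I_(2 * L).+1 -> R,
    grid_kernel pi ->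
    (forall l s, unfair P X S pi s l <= eps s) ->
    (risk P X B eta (piLV P S eta tau B beta Lam V)
       <= risk P X B eta pi + (ln ((2 * L).+1%:R) / beta)%:E)%E.
Proof.
move=> _ _ _ B_gt0 beta_gt0 _ mX _ mS _ pS_pos ce_eta ce_tau Lam_ge0 V_ge0 Fmin.
have meta : measurable_fun setT eta by case: ce_eta.
by apply: risk_softmax_le.
Qed.
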